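(* Let $n\ge 2$ and $q$ a prime power. The association scheme $\mathcal X(GU(n,q),\Phi(n,q))$ is commutative (i.e., $p_{ij}^h=p_{ji}^h$ for all $h,i,j$) if and only if $q=2$.
   Context: $\Phi(n,q)=\{x\in\mathbb{F}_{q^2}^n\setminus\{0\}:\langle x,x\rangle=0\}$ with $\langle x,y\rangle=\sum_k x_k y_k^{\,q}$. $\mathcal X(GU(n,q),\Phi(n,q))$ is the Schurian association scheme on $\Phi(n,q)$ whose relations are the orbitals (orbits on $\Phi(n,q)\times\Phi(n,q)$) of $GU(n,q)=\{U\in GL_n(\mathbb{F}_{q^2}):U\bar U^T=I\}$ acting by $x\mapsto xU$. For relations $R_h,R_i,R_j$, $p_{ij}^h=|\{z:(x,z)\in R_i,(z,y)\in R_j\}|$ for any $(x,y)\in R_h$. *)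

From HB Require Import structures.
From mathcomp Require Import all_boot all_order all_algebra all_field.
Set Implicit Arguments. Unset Strict Implicit. Unset Printing Implicit Defensive.
Import GRing.Theory.
Local Open Scope ring_scope.

(* F plays the role of F_{q^2}; the "bar" map is the Frobenius x |-> x^q. *)

Definition herm (F : finFieldType) (n q : nat) (x y : 'rV[F]_n) : F :=
  \sum_(k < n) x ord0 k * (y ord0 k) ^+ q.

Definition Phi (F : finFieldType) (n q : nat) : pred 'rV[F]_n :=
  fun x => (x != 0) && (herm q x x == 0).

Definition in_GU (F : finFieldType) (n q : nat) (U : 'M[F]_n) : bool :=
  U *m (map_mx (fun a : F => a ^+ q) U)^T == 1%:M.

Definition orbital (F : finFieldType) (n q : nat) (a b x y : 'rV[F]_n) : bool :=
  [exists U : 'M[F]_n, [&& in_GU q U, x == a *m U & y == b *m U]].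

(* Commutativity of the Schurian scheme X(GU(n,q), Phi(n,q)):
   for all relations R_i = orbital (a,b), R_j = orbital (c,d) (with
   (a,b),(c,d) in Phi x Phi) and every pair (x,y) in Phi x Phi (which lies in
   some relation R_h), p_ij^h = p_ji^h, i.e.
   #{z in Phi | (x,z) in R_i, (z,y) in R_j}
     = #{z in Phi | (x,z) in R_j, (z,y) in R_i}. *)
Definition scheme_commutative (F : finFieldType) (n q : nat) : Prop :=
  forall a b c d x y : 'rV[F]_n,
    Phi q a -> Phi q b -> Phi q c -> Phi q d -> Phi q x -> Phi q y ->
    #|[pred z | Phi q z && orbital q a b x z && orbital q c d z y]|
    = #|[pred z | Phi q z && orbital q c d x z && orbital q a b z y]|.

(* When q = 2, F = GF(4) and conjugation is squaring.  Any two isotropic vectors x, y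
   can then be carried by a unitary map U to (conj y, conj x): this instance of Witt's
   theorem is obtained from explicit rank-two transvections and Eichler transformations,
   according to whether y is a multiple of x, <x, y> <> 0, or x and y span a totally
   isotropic plane.  The map z |-> conj (z U) then sends the paths counted by p_ij^h
   injectively to those counted by p_ji^h.
   When q <> 2, pick isotropic x, y with <x, y> <> 0 and l with l^(q+1) <> 1, and let
   R_i, R_j be the orbitals of (x, l x) and (l x, y).  Then l x is a path x -> y of type
   (R_i, R_j), while a path z of type (R_j, R_i) would give y = l z and
   <x, z> = l <x, y>, whence l^(q+1) = 1. *)

From mathcomp Require Import all_boot all_order all_algebra all_field.
From mathcomp.algebra_tactics Require Import ring.
From mathcomp Require Import cyclic zify.
Set Implicit Arguments. Unset Strict Implicit. Unset Printing Implicit Defensive.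
Import GRing.Theory.
Local Open Scope ring_scope.

Lemma exists_coord_neq0 (R : zmodType) n (u : 'rV[R]_n) :
  u != 0 -> exists k, u 0 k != 0.
Proof.
move=> u0; apply/existsP; apply: contraNT u0 => /existsPn u0.
by apply/eqP/rowP => k; rewrite mxE; apply/eqP/negbNE/u0.
Qed.

Definition unitary (F : finFieldType) (n q : nat) (U : 'M[F]_n) : Prop :=
  forall x y : 'rV[F]_n, herm q (x *m U) (y *m U) = herm q x y.

Section HermitianForm.
Variables (F : finFieldType) (q : nat).
Hypothesis frobD : forall x y : F, (x + y) ^+ q = x ^+ q + y ^+ q.
Variable n : nat.
Implicit Types (x y z : 'rV[F]_n) (U V : 'M[F]_n).
Local Notation h := (@herm F n q).
Local Notation conj := (fun a : F => a ^+ q).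

Lemma frob0 : (0 : F) ^+ q = 0.
Proof. by apply: (@addrI _ (0 ^+ q)); rewrite -frobD !addr0. Qed.

Lemma hermDl x y z : h (x + y) z = h x z + h y z.
Proof. by rewrite /herm -big_split; apply: eq_bigr => k _; rewrite mxE mulrDl. Qed.

Lemma hermZl a x z : h (a *: x) z = a * h x z.
Proof. by rewrite /herm mulr_sumr; apply: eq_bigr => k _; rewrite mxE mulrA. Qed.

Lemma hermDr x y z : h x (y + z) = h x y + h x z.
Proof. by rewrite /herm -big_split; apply: eq_bigr => k _; rewrite mxE frobD mulrDr. Qed.

Lemma hermZr a x y : h x (a *: y) = a ^+ q * h x y.
Proof. by rewrite /herm mulr_sumr; apply: eq_bigr => k _; rewrite mxE exprMn mulrCA. Qed.

Lemma herm0r x : h x 0 = 0.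
Proof. by rewrite /herm big1 // => k _; rewrite mxE frob0 mulr0. Qed.

Lemma herm_delta i j : h (delta_mx 0 i) (delta_mx 0 j) = (i == j)%:R.
Proof.
rewrite /herm (bigD1 i) //= big1 => [|k /negbTE ki]; last first.
  by rewrite !mxE eq_sym ki mulr0n mul0r.
by rewrite !mxE !eqxx mul1r addr0; case: (i == j); rewrite ?expr1n ?frob0.
Qed.

Lemma herm_deltar x k : h x (delta_mx 0 k) = x 0 k.
Proof.
rewrite /herm (bigD1 k) //= big1 => [|j /negbTE jk]; last first.
  by rewrite !mxE eq_sym jk frob0 mulr0.
by rewrite !mxE !eqxx expr1n mulr1 addr0.
Qed.

Lemma map_mx_frobM m k p (A : 'M[F]_(m, k)) (B : 'M[F]_(k, p)) :
  map_mx conj (A *m B) = map_mx conj A *m map_mx conj B.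
Proof.
apply/matrixP => i j; rewrite !mxE (big_morph conj frobD frob0).
by apply: eq_bigr => l _; rewrite !mxE exprMn.
Qed.

Lemma herm_mxE x y : h x y = (x *m (map_mx conj y)^T) 0 0.
Proof. by rewrite /herm !mxE; apply: eq_bigr => k _; rewrite !mxE. Qed.

Lemma unitaryP U : reflect (unitary q U) (in_GU q U).
Proof.
apply: (iffP eqP) => [UU x y | hU].
  by rewrite !herm_mxE map_mx_frobM trmx_mul !mulmxA -(mulmxA x) UU mulmx1.
apply/matrixP => i j; rewrite !mxE -herm_delta -(hU (delta_mx 0 i)) herm_mxE.
by rewrite -!rowE !mxE; apply: eq_bigr => k _; rewrite !mxE.
Qed.

Lemma unitary_mul U V : unitary q U -> unitary q V -> unitary q (U *m V).
Proof. by move=> hU hV x y; rewrite !mulmxA hV hU. Qed.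

Lemma unitary_inj U : unitary q U -> injective (fun x : 'rV[F]_n => x *m U).
Proof.
move=> /unitaryP /eqP UU x y /= Exy.
by rewrite -(mulmx1 x) -(mulmx1 y) -UU !mulmxA Exy.
Qed.

Lemma Phi_neq0 x : Phi q x -> x != 0.
Proof. by case/andP. Qed.

Lemma Phi_herm x : Phi q x -> h x x = 0.
Proof. by case/andP=> _ /eqP. Qed.

Lemma PhiZ a x : a != 0 -> Phi q x -> Phi q (a *: x).
Proof.
move=> a0 /andP[x0 /eqP xx]; rewrite /Phi scaler_eq0 negb_or a0 x0.
by rewrite hermZl hermZr xx !mulr0 eqxx.
Qed.

Lemma unitary_Phi U x : unitary q U -> Phi q x -> Phi q (x *m U).
Proof.
move=> hU /andP[x0 xx]; rewrite /Phi hU xx andbT.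
by apply: contra_neq x0 => xU0; apply: (unitary_inj hU); rewrite /= xU0 mul0mx.
Qed.

Lemma orbital_mulmx a b x y U :
  unitary q U -> orbital q a b x y -> orbital q a b (x *m U) (y *m U).
Proof.
move=> hU /existsP[W /and3P[GW /eqP-> /eqP->]]; apply/existsP; exists (W *m U).
by rewrite !mulmxA !eqxx !andbT; apply/unitaryP/unitary_mul/hU/unitaryP.
Qed.

Lemma orbital_herm a b x y : orbital q a b x y -> h x y = h a b.
Proof. by case/existsP=> W /and3P[/unitaryP hW /eqP-> /eqP->]. Qed.

Lemma orbital_refl (a b : 'rV[F]_n) : orbital q a b a b.
Proof.
apply/existsP; exists 1%:M; rewrite !mulmx1 !eqxx !andbT.
by apply/unitaryP => x y; rewrite !mulmx1.
Qed.
End HermitianForm.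

Lemma orbital_scaler (F : finFieldType) n q (a x y : 'rV[F]_n) l :
  orbital q a (l *: a) x y -> y = l *: x.
Proof. by case/existsP=> W /and3P[_ /eqP-> /eqP->]; rewrite scalemxAl. Qed.

Section NonCommutative.
Variables (F : finFieldType) (q n : nat).
Hypothesis frobD : forall x y : F, (x + y) ^+ q = x ^+ q + y ^+ q.

Lemma scheme_not_commutative (x y : 'rV[F]_n) (lam : F) :
  Phi q x -> Phi q y -> herm q x y != 0 -> lam != 0 -> lam ^+ q.+1 != 1 ->
  ~ scheme_commutative F n q.
Proof.
move=> Px Py xy lam0 lam1 comm; have Plx := PhiZ lam0 Px.
have /card_gt0P[z] : (0 < #|[pred z | Phi q z && orbital q (lam *: x) y x z
                                      && orbital q x (lam *: x) z y]|)%N.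
  rewrite -(comm _ _ _ _ _ _ Px Plx Plx Py Px Py).
  by apply/card_gt0P; exists (lam *: x); rewrite inE Plx !orbital_refl.
rewrite inE => /andP[/andP[_ /(orbital_herm frobD) xz] /orbital_scaler yz].
apply/negP: lam1; rewrite negbK; apply/eqP/(mulIf xy).
by rewrite mul1r exprSr -mulrA -hermZl -xz -hermZr -yz.
Qed.

Lemma exists_isotropic_nonorth (mu be : F) : (2 <= n)%N ->
    mu ^+ q.+1 = -1 -> be ^+ q.+1 = 1 -> be != 1 ->
  exists x y : 'rV[F]_n, [/\ Phi q x, Phi q y & herm q x y != 0].
Proof.
move=> n_ge2 mu_norm be_norm be1.
pose i0 : 'I_n := Ordinal (ltnW n_ge2); pose i1 : 'I_n := Ordinal n_ge2.
pose v a : 'rV[F]_n := delta_mx 0 i0 + a *: delta_mx 0 i1.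
have hv a b : herm q (v a) (v b) = 1 + a * b ^+ q.
  by rewrite hermDl !(hermDr frobD) !hermZl !hermZr !(herm_delta frobD)
    /= !mulr0 !addr0 add0r mulr1.
have v_neq0 a : v a != 0.
  apply/negP => /eqP/rowP/(_ i0); rewrite !mxE eqxx /= mulr0 addr0.
  by move/eqP; rewrite oner_eq0.
have PhiV b : b ^+ q.+1 = 1 -> Phi q (v (mu * b)).
  move=> b_norm; rewrite /Phi v_neq0 hv -exprS exprMn mu_norm b_norm.
  by rewrite mulr1 addrN eqxx.
exists (v mu), (v (mu * be)); split; [| exact: PhiV |].
- by rewrite -[mu]mulr1 PhiV ?expr1n.
rewrite hv exprMn mulrA -exprS mu_norm mulN1r subr_eq0 eq_sym.
apply: contra be1 => /eqP beq; apply/eqP.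
by rewrite -be_norm exprSr beq mul1r.
Qed.
End NonCommutative.

Lemma finField_prim_root (F : finFieldType) : exists g : F, (#|F|.-1).-primitive_root g.
Proof.
have F_gt1 := finNzRing_gt1 F.
have /hasP[g _ prim_g] : has (#|F|.-1).-primitive_root (enum (predC1 (0 : F))).
  apply: has_prim_root; rewrite ?enum_uniq -?cardE ?cardC1 //; first by case: #|F| F_gt1.
  apply/allP => x; rewrite mem_enum inE => x0; apply/unity_rootP.
  by apply: (mulIf x0); rewrite mul1r -exprSr prednK ?expf_card // ltnW.
by exists g.
Qed.

Lemma prim_root_expr_neq1 (R : nzRingType) N (z : R) i :
  N.-primitive_root z -> (0 < i < N)%N -> z ^+ i != 1.
Proof. by move=> prim_z /andP[i0 iN]; rewrite -(prim_order_dvd prim_z) gtnNdvd. Qed.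

Lemma frobD_pchar (F : finFieldType) p k (x y : F) :
  p \in [pchar F] -> (x + y) ^+ (p ^ k) = x ^+ (p ^ k) + y ^+ (p ^ k).
Proof.
move=> pcharFp; apply: exprDn_pchar.
by rewrite (eq_pnat _ (pcharf_eq pcharFp)) pnatX pnat_id ?orbT // (pcharf_prime pcharFp).
Qed.

Section NormValues.
Variables (F : finFieldType) (p k : nat) (g : F).
Let q := (p ^ k)%N.
Hypotheses (pcharFp : p \in [pchar F]) (k_gt0 : (0 < k)%N).
Hypothesis g_prim : ((q ^ 2).-1).-primitive_root g.

Let q_gt1 : (1 < q)%N.
Proof. by rewrite /q -(exp1n k) ltn_exp2r // prime_gt1 // (pcharf_prime pcharFp). Qed.

Lemma exists_norm_neg1 : exists mu : F, mu ^+ q.+1 = -1.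
Proof.
have [p2 | odd_p] := even_prime (pcharf_prime pcharFp).
  by exists 1; apply/eqP; rewrite expr1n -addr_eq0 addrr_pchar2 // -p2.
have odd_q : odd q by rewrite /q oddX odd_p orbT.
have [m qm] : exists m, q = (m + m).+1.
  by exists q./2; rewrite addnn -[q in LHS]odd_double_half odd_q.
exists (g ^+ m); rewrite -exprM.
set s := g ^+ _; have s2 : s ^+ 2 = 1.
  by rewrite -exprM -(prim_expr_order g_prim); congr (_ ^+ _); rewrite qm; nia.
have s1 : s != 1 by apply: prim_root_expr_neq1 g_prim _; rewrite qm; nia.
have /eqP : (s - 1) * (s + 1) = 0 by rewrite -subr_sqr expr1n s2 subrr.
by rewrite mulf_eq0 subr_eq0 (negbTE s1) addr_eq0 => /eqP.
Qed.

Lemma exists_norm1_neq1 : exists be : F, be ^+ q.+1 = 1 /\ be != 1.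
Proof.
exists (g ^+ q.-1); rewrite -exprM; split.
  by rewrite -(prim_expr_order g_prim); congr (_ ^+ _); nia.
by apply: prim_root_expr_neq1 g_prim _; nia.
Qed.

Lemma exists_norm_neq1 : q != 2%N -> exists lam : F, lam != 0 /\ lam ^+ q.+1 != 1.
Proof.
move=> q_neq2; exists g; rewrite (prim_root_eq0 g_prim); split.
  by rewrite -lt0n; nia.
by apply: prim_root_expr_neq1 g_prim _; move/eqP: q_neq2; nia.
Qed.
End NormValues.

Section GF4.
Variable F : finFieldType.
Hypothesis cardF : #|F| = 4%N.

Lemma pchar2_F4 : 2 \in [pchar F].
Proof. exact: (@card_finPcharP F 2 2). Qed.

Local Notation addrr := (addrr_pchar2 pchar2_F4).

Lemma sqrD_F4 (x y : F) : (x + y) ^+ 2 = x ^+ 2 + y ^+ 2.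
Proof. exact: (@frobD_pchar F 2 1 x y pchar2_F4). Qed.

Lemma sqrK_F4 (x : F) : (x ^+ 2) ^+ 2 = x.
Proof. by rewrite -exprM -[(2 * 2)%N]cardF expf_card. Qed.

Lemma expr3_F4 (x : F) : x != 0 -> x ^+ 3 = 1.
Proof. by move=> x0; apply: (mulfI x0); rewrite -exprS -[4%N]cardF expf_card mulr1. Qed.

Lemma exists_omega_F4 : exists w : F, w ^+ 2 + w = 1.
Proof.
have [w /andP[w0 w1]] : exists w : F, (w != 0) && (w != 1).
  apply/existsP; apply: contraT; rewrite negb_exists => /forallP F01.
  suff : (#|F| <= #|[set 0%R; 1%R] : {set F}|)%N by rewrite cardF cards2; case: (_ == _).
  apply/subset_leq_card/subsetP => x _; rewrite !inE.
  by move: (F01 x); rewrite negb_and !negbK orbC.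
exists w; have /eqP : (w - 1) * (w ^+ 2 + w + 1) = 0.
  by rewrite -[RHS](subrr (w ^+ 3)) {2}expr3_F4 //; ring.
rewrite mulf_eq0 subr_eq0 (negbTE w1) /= => /eqP w3.
by rewrite -[LHS]addr0 -(addrr 1) addrA w3 add0r.
Qed.

Variable n : nat.
Implicit Types (x y z u v w : 'rV[F]_n) (U : 'M[F]_n).
Local Notation h := (@herm F n 2).
Local Notation hermDr := (hermDr sqrD_F4).
Local Notation herm0r := (herm0r sqrD_F4).
Local Notation herm_deltar := (herm_deltar sqrD_F4).
Local Notation unitary_inj := (unitary_inj sqrD_F4).
Local Notation unitary_Phi := (unitary_Phi sqrD_F4).
Local Notation orbital_mulmx := (orbital_mulmx sqrD_F4).

Definition conjv x : 'rV[F]_n := map_mx (fun a => a ^+ 2) x.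

Lemma hermC x y : h y x = h x y ^+ 2.
Proof.
rewrite /herm (big_morph (fun a : F => a ^+ 2) sqrD_F4 (expr0n _ 2)).
by apply: eq_bigr => k _; rewrite exprMn sqrK_F4 mulrC.
Qed.

Lemma herm_conjv x y : h (conjv x) (conjv y) = h y x.
Proof. by apply: eq_bigr => k _; rewrite !mxE sqrK_F4 mulrC. Qed.

Lemma conjvK : involutive conjv.
Proof. by move=> x; apply/rowP => k; rewrite !mxE sqrK_F4. Qed.

Lemma conjvZ a x : conjv (a *: x) = a ^+ 2 *: conjv x.
Proof. by apply/rowP => k; rewrite !mxE exprMn. Qed.

Lemma Phi_conjv x : Phi 2 x -> Phi 2 (conjv x).
Proof.
case/andP=> x0 xx; rewrite /Phi herm_conjv xx andbT.
by apply: contra_neq x0 => cx0; rewrite -[x]conjvK cx0; apply/rowP => k; rewrite !mxE expr0n.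
Qed.

Definition outer a b : 'M[F]_n := (conjv a)^T *m b.

Lemma mul_outer x a b : x *m outer a b = h x a *: b.
Proof. by rewrite /outer mulmxA [x *m _]mx11_scalar -herm_mxE mul_scalar_mx. Qed.

Definition rank2_update e1 e2 (c11 c12 c21 c22 : F) : 'M[F]_n :=
  1%:M + c11 *: outer e1 e1 + c12 *: outer e1 e2 + c21 *: outer e2 e1 + c22 *: outer e2 e2.

Lemma mul_rank2_update x e1 e2 c11 c12 c21 c22 :
  x *m rank2_update e1 e2 c11 c12 c21 c22
  = x + (c11 * h x e1 + c21 * h x e2) *: e1 + (c12 * h x e1 + c22 * h x e2) *: e2.
Proof.
rewrite /rank2_update !mulmxDr mulmx1 -!scalemxAr !mul_outer.
by apply/rowP => k; rewrite !mxE; ring.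
Qed.

(* The four hypotheses are the entries of [C + C^* + C G C^* = 0], where [C = (c_ij)],
   [G] is the Gram matrix of [(e1, e2)] and [^*] is the conjugate transpose. *)
Lemma rank2_update_unitary e1 e2 c11 c12 c21 c22 :
  c11 ^+ 2 + c11 + (c11 * h e1 e1 * c11 ^+ 2 + c11 * h e1 e2 * c12 ^+ 2
                    + c12 * h e2 e1 * c11 ^+ 2 + c12 * h e2 e2 * c12 ^+ 2) = 0 ->
  c21 ^+ 2 + c12 + (c11 * h e1 e1 * c21 ^+ 2 + c11 * h e1 e2 * c22 ^+ 2
                    + c12 * h e2 e1 * c21 ^+ 2 + c12 * h e2 e2 * c22 ^+ 2) = 0 ->
  c12 ^+ 2 + c21 + (c21 * h e1 e1 * c11 ^+ 2 + c21 * h e1 e2 * c12 ^+ 2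
                    + c22 * h e2 e1 * c11 ^+ 2 + c22 * h e2 e2 * c12 ^+ 2) = 0 ->
  c22 ^+ 2 + c22 + (c21 * h e1 e1 * c21 ^+ 2 + c21 * h e1 e2 * c22 ^+ 2
                    + c22 * h e2 e1 * c21 ^+ 2 + c22 * h e2 e2 * c22 ^+ 2) = 0 ->
  unitary 2 (rank2_update e1 e2 c11 c12 c21 c22).
Proof.
move=> E11 E12 E21 E22 x y; rewrite !mul_rank2_update.
rewrite !(hermDl, hermDr, hermZl, hermZr) (hermC y e1) (hermC y e2) !sqrD_F4 !exprMn.
set a1 := h x e1; set a2 := h x e2; set b1 := h y e1; set b2 := h y e2.
transitivity (h x y + a1 * b1 ^+ 2 * (c11 ^+ 2 + c11 + (c11 * h e1 e1 * c11 ^+ 2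
    + c11 * h e1 e2 * c12 ^+ 2 + c12 * h e2 e1 * c11 ^+ 2 + c12 * h e2 e2 * c12 ^+ 2))
  + a1 * b2 ^+ 2 * (c21 ^+ 2 + c12 + (c11 * h e1 e1 * c21 ^+ 2
    + c11 * h e1 e2 * c22 ^+ 2 + c12 * h e2 e1 * c21 ^+ 2 + c12 * h e2 e2 * c22 ^+ 2))
  + a2 * b1 ^+ 2 * (c12 ^+ 2 + c21 + (c21 * h e1 e1 * c11 ^+ 2
    + c21 * h e1 e2 * c12 ^+ 2 + c22 * h e2 e1 * c11 ^+ 2 + c22 * h e2 e2 * c12 ^+ 2))
  + a2 * b2 ^+ 2 * (c22 ^+ 2 + c22 + (c21 * h e1 e1 * c21 ^+ 2
    + c21 * h e1 e2 * c22 ^+ 2 + c22 * h e2 e1 * c21 ^+ 2 + c22 * h e2 e2 * c22 ^+ 2))).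
  by ring.
by rewrite E11 E12 E21 E22 !mulr0 !addr0.
Qed.

Lemma addrr_row x : x + x = 0.
Proof. by apply/rowP => k; rewrite !mxE addrr. Qed.

Lemma unitary_move_nonorth u1 u2 (S : 'rV[F]_n -> Prop) :
  h u1 u1 = 0 -> h u2 u2 = 0 -> h u1 u2 != 0 ->
  (forall s, S s -> h s u1 = 0 /\ h s u2 = 0) ->
  exists U, [/\ unitary 2 U, u1 *m U = u2 & forall s, S s -> s *m U = s].
Proof.
move=> u1u1 u2u2 t0 S_orth; set t := h u1 u2 in t0.
have t3 : t ^+ 3 = 1 by apply: expr3_F4.
have u2u1 : h u2 u1 = t ^+ 2 by rewrite hermC.
have cancel_t3 (c d : F) : (t ^+ 3 - 1) * c + (d + d) = 0.
  by rewrite t3 subrr mul0r add0r addrr.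
exists (rank2_update u1 u2 (t ^+ 2) t (t ^+ 2) (t ^+ 2)); split.
- apply: rank2_update_unitary; rewrite u1u1 u2u2 u2u1 -/t.
  + by rewrite -[RHS](cancel_t3 (2%:R * t + t ^+ 2 + t ^+ 4) (t + t ^+ 2)); ring.
  + by rewrite -[RHS](cancel_t3 (3%:R * t + 2%:R * t ^+ 4) (2%:R * t)); ring.
  + by rewrite -[RHS](cancel_t3 (2%:R * t ^+ 2 + t ^+ 5) (2%:R * t ^+ 2)); ring.
  + by rewrite -[RHS](cancel_t3 (2%:R * t + t ^+ 4 + t ^+ 5 + t ^+ 2) (t + t ^+ 2)); ring.
- rewrite mul_rank2_update u1u1 -/t !mulr0 !add0r -exprSr t3 !scale1r.
  by rewrite addrr_row add0r.
- move=> s /S_orth[su1 su2].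
  by rewrite mul_rank2_update su1 su2 !mulr0 !addr0 !scale0r !addr0.
Qed.

Lemma eichler_unitary w e r :
  h w w = 0 -> h w e = 0 -> h e e = r + r ^+ 2 -> unitary 2 (rank2_update w e r 1 1 0).
Proof.
move=> ww we ee; have ew : h e w = 0 by rewrite hermC we expr0n.
apply: rank2_update_unitary; rewrite ww we ew ee.
- by rewrite -[RHS](addrr (r + r ^+ 2)); ring.
- by rewrite -[RHS](addrr 1); ring.
- by rewrite -[RHS](addrr 1); ring.
- by ring.
Qed.

Lemma exists_nonorth u1 u2 : u1 != 0 -> u2 != 0 ->
  exists z, (h u1 z != 0) && (h u2 z != 0).
Proof.
move=> /exists_coord_neq0[k u1k] /exists_coord_neq0[l u2l]; rewrite -!herm_deltar in u1k u2l.
have [u2k | /negbNE/eqP u2k] := boolP (h u2 (delta_mx 0 k) != 0).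
  by exists (delta_mx 0 k); rewrite u1k u2k.
have [u1l | /negbNE/eqP u1l] := boolP (h u1 (delta_mx 0 l) != 0).
  by exists (delta_mx 0 l); rewrite u1l u2l.
by exists (delta_mx 0 k + delta_mx 0 l); rewrite !hermDr u2k u1l add0r addr0 u1k u2l.
Qed.

Variable om : F.
Hypothesis omE : om ^+ 2 + om = 1.

(* With [t := c * <a, z>] the condition [<z + c a, z + c a> = 0] reads [t + t^2 = <z, z>];
   as [<z, z>] lies in GF(2), [t = <z, z> * om] solves it. *)
Lemma isotropic_shift a z : h a a = 0 -> h a z != 0 ->
  let w := z + (h z z * om / h a z) *: a in h w w = 0.
Proof.
move=> aa az w; set c := h z z * om / h a z.
have ca : c * h a z = h z z * om by rewrite mulfVK.
rewrite /w -/c !(hermDl, hermDr, hermZl, hermZr) aa !mulr0 addr0 [h z a]hermC.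
transitivity (h z z + (c * h a z) ^+ 2 + c * h a z); first by ring.
rewrite ca exprMn -hermC -addrA -mulrDr omE mulr1; exact: addrr.
Qed.

(* When [u1] and [u2] are orthogonal, pass through an isotropic [w] meeting both. *)
Lemma unitary_move_isotropic u1 u2 z (S : 'rV[F]_n -> Prop) :
  h u1 u1 = 0 -> h u2 u2 = 0 -> h u1 z != 0 -> h u2 z != 0 ->
  (forall s, S s -> [/\ h s u1 = 0, h s u2 = 0 & h s z = 0]) ->
  exists U, [/\ unitary 2 U, u1 *m U = u2 & forall s, S s -> s *m U = s].
Proof.
move=> u1u1 u2u2 u1z u2z S_orth.
have [u1u2 | /negbNE/eqP u1u2] := boolP (h u1 u2 != 0).
  by apply: unitary_move_nonorth => // s /S_orth[].
set c := h z z * om / h u1 z; set w := z + c *: u1.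
have ww : h w w = 0 by apply: isotropic_shift.
have u1w : h u1 w = h u1 z by rewrite hermDr hermZr u1u1 mulr0 addr0.
have u2w : h u2 w = h u2 z by rewrite hermDr hermZr [h u2 u1]hermC u1u2 !expr0n mulr0 addr0.
have S_orth_w s : S s -> h s w = 0.
  by case/S_orth=> su1 _ sz; rewrite hermDr hermZr su1 sz mulr0 addr0.
have [U1 [uU1 u1U1 SU1]] :
    exists U, [/\ unitary 2 U, u1 *m U = w & forall s, S s -> s *m U = s].
  apply: unitary_move_nonorth => //; first by rewrite u1w.
  by move=> s Ss; have [su1 _ _] := S_orth s Ss; rewrite S_orth_w.
have [U2 [uU2 wU2 SU2]] :
    exists U, [/\ unitary 2 U, w *m U = u2 & forall s, S s -> s *m U = s].
  apply: unitary_move_nonorth => //; first by rewrite hermC u2w expf_neq0.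
  by move=> s Ss; have [_ su2 _] := S_orth s Ss; rewrite S_orth_w.
exists (U1 *m U2); split; first exact: unitary_mul.
  by rewrite mulmxA u1U1.
by move=> s Ss; rewrite mulmxA SU1 ?SU2.
Qed.

Lemma unitary_move_Phi u1 u2 : Phi 2 u1 -> Phi 2 u2 ->
  exists U, unitary 2 U /\ u1 *m U = u2.
Proof.
move=> Pu1 Pu2; have [z /andP[u1z u2z]] := exists_nonorth (Phi_neq0 Pu1) (Phi_neq0 Pu2).
have [U [uU u1U _]] := unitary_move_isotropic (S := fun _ => False)
  (Phi_herm Pu1) (Phi_herm Pu2) u1z u2z (fun _ => False_ind _).
by exists U.
Qed.

(* Move [a] to [a'] first, then correct the image of [b] by an Eichler transformation
   fixing [a']. *)
Lemma unitary_hyperbolic_pair a b a' b' :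
  Phi 2 a -> Phi 2 b -> Phi 2 a' -> Phi 2 b' -> h a b = h a' b' -> h a b != 0 ->
  exists U, [/\ unitary 2 U, a *m U = a' & b *m U = b'].
Proof.
move=> Pa Pb Pa' Pb' ab_eq ab0.
have [U1 [uU1 aU1]] := unitary_move_Phi Pa Pa'.
set b1 := b *m U1; set t := h a b; set s := t ^+ 2.
have b1b1 : h b1 b1 = 0 by rewrite uU1 Phi_herm.
have a'b1 : h a' b1 = t by rewrite -aU1 uU1.
have b1a' : h b1 a' = s by rewrite hermC a'b1.
have s3 : s ^+ 3 = 1 by apply: expr3_F4; rewrite expf_neq0.
set r := h b1 b'; set e := s ^+ 2 *: (b1 + b').
have a'e : h a' e = 0 by rewrite hermZr hermDr a'b1 -ab_eq addrr mulr0.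
have ee : h e e = r + r ^+ 2.
  rewrite hermZl hermZr !(hermDl, hermDr) b1b1 (Phi_herm Pb') [h b' b1]hermC add0r addr0.
  by rewrite -[RHS]mul1r -(expr1n _ 2) -s3 -/r; ring.
have b1e : h b1 e = s * r.
  by rewrite hermZr hermDr b1b1 add0r -/r -[in RHS](mul1r s) -s3; ring.
exists (U1 *m rank2_update a' e r 1 1 0); split.
- exact/unitary_mul/eichler_unitary/ee/a'e/(Phi_herm Pa').
- by rewrite mulmxA aU1 mul_rank2_update (Phi_herm Pa') a'e !mulr0 !addr0 !scale0r !addr0.
rewrite mulmxA -/b1 mul_rank2_update b1a' b1e !mul1r mul0r addr0 [r * s]mulrC addrr.
by rewrite scale0r addr0 scalerA -exprS s3 scale1r addrA addrr_row add0r.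
Qed.

Lemma exists_minor_neq0 u v : u != 0 -> (forall l, v != l *: u) ->
  exists k l, v 0 k * u 0 l + v 0 l * u 0 k != 0.
Proof.
move=> /exists_coord_neq0[k uk] v_indep; exists k.
apply/existsP; apply: contraT => /existsPn minor0.
suff vE : v = (v 0 k / u 0 k) *: u by have := v_indep (v 0 k / u 0 k); rewrite -vE eqxx.
apply/rowP => l.
have /negbNE := minor0 l; rewrite mxE addr_eq0 oppr_pchar2 ?pchar2_F4 // => /eqP vkl.
by rewrite mulrAC vkl mulfK.
Qed.

Lemma exists_hyperbolic_partner u v : Phi 2 u -> Phi 2 v -> h u v = 0 ->
  (forall l, v != l *: u) -> exists y, [/\ h y y = 0, h v y = 1 & h u y = 0].
Proof.
move=> Pu Pv uv v_indep.
have [k [l minor]] := exists_minor_neq0 (Phi_neq0 Pu) v_indep.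
set d := _ + _ in minor.
pose f : 'rV[F]_n := (d^-1) ^+ 2 *: ((u 0 l) ^+ 2 *: delta_mx 0 k + (u 0 k) ^+ 2 *: delta_mx 0 l).
have hf x : h x f = d^-1 * (u 0 l * x 0 k + u 0 k * x 0 l).
  by rewrite !(hermZr, hermDr) !herm_deltar !sqrK_F4.
have vf : h v f = 1 by rewrite hf [u 0 l * _]mulrC [u 0 k * _]mulrC -/d mulVf.
have uf : h u f = 0 by rewrite hf [u 0 k * _]mulrC addrr mulr0.
exists (f + (h f f * om / h v f) *: v); split.
- by apply: isotropic_shift; rewrite ?vf ?oner_neq0 ?Phi_herm.
- by rewrite hermDr hermZr (Phi_herm Pv) mulr0 addr0.
- by rewrite hermDr hermZr uv mulr0 addr0.
Qed.

(* Complete both pairs to hyperbolic pairs [(v, y)], [(v', y')], match those, then move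
   the image of [u] to [u'] inside the orthogonal complement of [v'] and [y']. *)
Lemma unitary_isotropic_pair u v u' v' :
  Phi 2 u -> Phi 2 v -> Phi 2 u' -> Phi 2 v' -> h u v = 0 -> h u' v' = 0 ->
  (forall l, v != l *: u) -> (forall l, v' != l *: u') ->
  exists U, [/\ unitary 2 U, u *m U = u' & v *m U = v'].
Proof.
move=> Pu Pv Pu' Pv' uv u'v' v_indep v'_indep.
have [y [yy vy uy]] := exists_hyperbolic_partner Pu Pv uv v_indep.
have [y' [y'y' v'y' u'y']] := exists_hyperbolic_partner Pu' Pv' u'v' v'_indep.
have Phi_partner x w : h x x = 0 -> h w x = 1 -> Phi 2 x.
  move=> xx vx; rewrite /Phi xx eqxx andbT; apply: contra_eq_neq vx => ->.
  by rewrite herm0r eq_sym oner_neq0.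
have [U1 [uU1 vU1 yU1]] : exists U, [/\ unitary 2 U, v *m U = v' & y *m U = y'].
  apply: unitary_hyperbolic_pair => //; rewrite ?vy ?v'y' ?oner_neq0 //.
    exact: Phi_partner yy vy.
  exact: Phi_partner y'y' v'y'.
set u1 := u *m U1.
have u1v' : h u1 v' = 0 by rewrite -vU1 uU1.
have u1y' : h u1 y' = 0 by rewrite -yU1 uU1.
have [z0 /andP[u1z0 u'z0]] := exists_nonorth (Phi_neq0 (unitary_Phi uU1 Pu)) (Phi_neq0 Pu').
pose z := z0 + h z0 y' *: v' + h z0 v' *: y'.
have hz x : h x v' = 0 -> h x y' = 0 -> h x z = h x z0.
  by move=> xv' xy'; rewrite !(hermDr, hermZr) xv' xy' !mulr0 !addr0.
have y'v' : h y' v' = 1 by rewrite hermC v'y' expr1n.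
have [U2 [uU2 u1U2 SU2]] : exists U,
    [/\ unitary 2 U, u1 *m U = u' & forall s, s = v' \/ s = y' -> s *m U = s].
  apply: (@unitary_move_isotropic _ _ z).
  - by rewrite uU1 Phi_herm.
  - exact: Phi_herm.
  - by rewrite hz.
  - by rewrite hz.
  move=> s Ss; split.
  - by case: Ss => ->; rewrite hermC ?u1v' ?u1y' expr0n.
  - by case: Ss => ->; rewrite hermC ?u'v' ?u'y' expr0n.
  case: Ss => ->; rewrite !(hermDr, hermZr) -!(hermC z0) ?v'y' ?y'v'.
  + by rewrite (Phi_herm Pv') mulr0 addr0 mulr1 addrr.
  + by rewrite y'y' mulr0 addr0 mulr1 addrr.
exists (U1 *m U2); split; first exact: unitary_mul.
  by rewrite mulmxA u1U2.
by rewrite mulmxA vU1 SU2 //; left.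
Qed.

Lemma unitary_swap_conjv u v : Phi 2 u -> Phi 2 v ->
  exists U, [/\ unitary 2 U, u *m U = conjv v & v *m U = conjv u].
Proof.
move=> Pu Pv; have [l vE | v_indep] := pickP (fun l => v == l *: u).
  move/eqP: vE => vE; have l0 : l != 0.
    by apply: contra_neq (Phi_neq0 Pv) => l0; rewrite vE l0 scale0r.
  have [U [uU uUE]] := unitary_move_Phi Pu (PhiZ (expf_neq0 2 l0) (Phi_conjv Pu)).
  exists U; split; rewrite // vE ?conjvZ //.
  by rewrite -scalemxAl uUE scalerA -exprS expr3_F4 // scale1r.
have {}v_indep l : v != l *: u by rewrite v_indep.
have [uv | /negbNE/eqP uv] := boolP (h u v != 0).
  by apply: unitary_hyperbolic_pair; rewrite ?herm_conjv ?Phi_conjv.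
apply: unitary_isotropic_pair; rewrite ?herm_conjv ?Phi_conjv // => l.
apply: contra_neq (v_indep (l ^+ 2)^-1) => uE.
have l0 : l ^+ 2 != 0.
  by apply: contra_neq (Phi_neq0 Pu) => l0; rewrite -[u]conjvK uE conjvZ l0 scale0r.
by rewrite -[u]conjvK uE conjvZ conjvK scalerA mulVf ?scale1r.
Qed.

Lemma orbital_swap_conjv a b u v : Phi 2 u -> Phi 2 v ->
  orbital 2 a b u v -> orbital 2 a b (conjv v) (conjv u).
Proof.
move=> Pu Pv; have [U [uU <- <-]] := unitary_swap_conjv Pu Pv.
exact: orbital_mulmx.
Qed.

(* With [U] mapping [(x, y)] to [(conjv y, conjv x)], the injection [z |-> conjv (z *m U)]
   reverses the paths. *)
Lemma card_orbital_paths_le a b c d x y : Phi 2 x -> Phi 2 y ->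
  (#|[pred z | Phi 2 z && orbital 2 a b x z && orbital 2 c d z y]|
   <= #|[pred z | Phi 2 z && orbital 2 c d x z && orbital 2 a b z y]|)%N.
Proof.
move=> Px Py; have [U [uU xU yU]] := unitary_swap_conjv Px Py.
have Phi_U z : Phi 2 z -> Phi 2 (z *m U) by apply: unitary_Phi.
have inj_rev : injective (fun z => conjv (z *m U)).
  by move=> z1 z2 /(can_inj conjvK)/(unitary_inj uU).
rewrite -(card_imset _ inj_rev); apply/subset_leq_card/subsetP => _ /imsetP[z + ->].
rewrite !inE => /andP[/andP[Pz xz] zy]; rewrite Phi_conjv ?Phi_U //=.
move: (orbital_mulmx uU xz) (orbital_mulmx uU zy); rewrite xU yU.
move=> /(orbital_swap_conjv (Phi_conjv Py) (Phi_U _ Pz)) ab.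
move=> /(orbital_swap_conjv (Phi_U _ Pz) (Phi_conjv Px)) cd.
by move: ab cd; rewrite !conjvK => -> ->.
Qed.
End GF4.

Lemma scheme_commutative_F4 (F : finFieldType) n :
  #|F| = 4%N -> scheme_commutative F n 2.
Proof.
move=> cardF; have [om omE] := exists_omega_F4 cardF.
move=> a b c d x y _ _ _ _ Px Py; apply/eqP; rewrite eqn_leq.
by rewrite !(card_orbital_paths_le cardF omE).
Qed.

Theorem theorem4p1 (F : finFieldType) (n q : nat) :
  (2 <= n)%N ->
  (exists p k : nat, prime p /\ (0 < k)%N /\ q = (p ^ k)%N) ->
  #|F| = (q ^ 2)%N ->
  (scheme_commutative F n q <-> q = 2%N).
Proof.
move=> n_ge2 [p [k [p_prime [k_gt0 ->]]]] cardF; split=> [comm | q2]; last first.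
  by rewrite q2 in cardF *; apply: scheme_commutative_F4.
apply/eqP/negPn/negP => q_neq2.
have pcharFp : p \in [pchar F] by apply: card_finPcharP p_prime; rewrite cardF -expnM.
have frobD x y := @frobD_pchar F p k x y pcharFp.
have [g] := finField_prim_root F; rewrite cardF => g_prim.
have [mu mu_norm] := exists_norm_neg1 pcharFp k_gt0 g_prim.
have [be [be_norm be1]] := exists_norm1_neq1 pcharFp k_gt0 g_prim.
have [lam [lam0 lam_norm]] := exists_norm_neq1 pcharFp k_gt0 g_prim q_neq2.
have [x [y [Px Py xy]]] := exists_isotropic_nonorth frobD n_ge2 mu_norm be_norm be1.
exact: (scheme_not_commutative frobD Px Py xy lam0 lam_norm comm).
Qed.
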